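(* Let $T$ and $B$ be two flat-foldable developable degree-4 single-vertex creased papers sharing two panels, so that they share one inner crease $c$ (the crease joining the two vertices); this union is called a unit. Let $\alpha_1,\alpha_2\in(0,\pi)$ be the sector angles of $T$ adjacent to $c$ and $\alpha_3,\alpha_4\in(0,\pi)$ the sector angles of $B$ adjacent to $c$, with $\alpha_1,\alpha_2$ not both equal to $\pi/2$ and $\alpha_3,\alpha_4$ not both equal to $\pi/2$. Suppose the unit folds rigidly over a closed interval of the common folding angle $\rho$ of $c$ containing more than one point, each vertex moving along one of its two branches (described in the context). For each vertex, the two inner creases adjacent to $c$ lie on the two sides of $c$; call the creases of $T$ and $B$ lying on the same side of $c$ ''corresponding''. Then the folding angles of corresponding creases of $T$ and $B$ are equal up to sign throughout the interval (i.e. $\rho_2\equiv\pm\rho_5$ and $\rho_4\equiv\pm\rho_7$, where $\rho_2,\rho_4$ are the side folding angles of $T$ and $\rho_5,\rho_7$ the corresponding ones of $B$) if and only if one of the following holds: (i) both $T$ and $B$ move along branch 1, and $$\frac{\tan\frac{\alpha_1}{2}}{\tan\frac{\alpha_2}{2}}=\frac{\tan\frac{\alpha_3}{2}}{\tan\frac{\alpha_4}{2}}\quad\text{or}\quad \frac{\tan\frac{\alpha_1}{2}}{\tan\frac{\alpha_2}{2}}=\frac{\tan\frac{\alpha_4}{2}}{\tan\frac{\alpha_3}{2}};$$ (ii) both $T$ and $B$ move along branch 2, and $$\tan\tfrac{\alpha_1}{2}\tan\tfrac{\alpha_2}{2}=\tan\tfrac{\alpha_3}{2}\tan\tfrac{\alpha_4}{2}\quad\text{or}\quad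 \tan\tfrac{\alpha_1}{2}\tan\tfrac{\alpha_2}{2}\tan\tfrac{\alpha_3}{2}\tan\tfrac{\alpha_4}{2}=1.$$ In particular, the condition can never hold when one vertex moves along branch 1 and the other along branch 2.
   Context: A developable degree-4 single-vertex creased paper consists of four rigid planar panels around a vertex, with sector angles summing to $2\pi$, hinged along four inner creases; a rigid folding motion assigns to each crease a signed folding angle (0 = unfolded, sign = mountain/valley), the folding angle of a crease being intrinsic to that crease. It is flat-foldable if opposite sector angles sum to $\pi$. For a flat-foldable vertex with sector angles $\beta_1,\beta_2,\beta_3,\beta_4$ in cyclic order, $\beta_1+\beta_3=\pi$, $\beta_2+\beta_4=\pi$, $\beta_1,\beta_2\in(0,\pi)$ not both $\pi/2$, and creases $c_1$ (between $\beta_1,\beta_2$), $c_2$ (between $\beta_2,\beta_3$), $c_3$ (between $\beta_3,\beta_4$), $c_4$ (between $\beta_4,\beta_1$) with folding angles $\rho_1,\dots,\rho_4$, its rigid folding motions lie on two branches: Branch 1: $\tan\frac{\rho_2}{2}=\frac{\sin\frac{\beta_2-\beta_1}{2}}{\sin\frac{\beta_2+\beta_1}{2}}\tan\frac{\rho_1}{2}$, $\rho_3=\rho_1$, $\rho_4=-\rho_2$. Branch 2: $\tan\frac{\rho_2}{2}=-\frac{\cos\frac{\beta_2-\beta_1}{2}}{\cos\frac{\beta_2+\beta_1}{2}}\tan\frac{\rho_1}{2}$, $\rho_3=-\rho_1$, $\rho_4=\rho_2$. In the claim these are applied to each of $T$ and $B$ with $c_1$ taken to be the shared crease $c$ (so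 $(\beta_1,\beta_2)=(\alpha_1,\alpha_2)$ for $T$ and $(\alpha_3,\alpha_4)$ for $B$), the side creases being $c_2$ and $c_4$ of each vertex. *)

From Stdlib Require Import Reals Lra.
Open Scope R_scope.

(* Denominator-free form of  tan(x/2) = (N/D) * tan(y/2).
   For folding angles x, y in [-PI, PI] (half angles in [-PI/2, PI/2]) this
   is exactly the paper's relation whenever the tangents/quotient are finite,
   and it is the natural (projective) reading of it at flat-folded states
   (x or y = +-PI) and when D = 0. *)
Definition half_tan_rel (N D x y : R) : Prop :=
  D * sin (x / 2) * cos (y / 2) = N * sin (y / 2) * cos (x / 2).

Inductive branch : Type := Br1 | Br2.

(* Folding angles (r1,r2,r3,r4) of a flat-foldable degree-4 vertex with sector
   angles b1, b2, PI-b1, PI-b2 (crease c1 between b1 and b2, c2 between b2 and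
   b3, c3 between b3 and b4, c4 between b4 and b1) lie on the given branch. *)
Definition on_branch (br : branch) (b1 b2 r1 r2 r3 r4 : R) : Prop :=
  match br with
  | Br1 => half_tan_rel (sin ((b2 - b1) / 2)) (sin ((b2 + b1) / 2)) r2 r1
           /\ r3 = r1 /\ r4 = - r2
  | Br2 => half_tan_rel (- cos ((b2 - b1) / 2)) (cos ((b2 + b1) / 2)) r2 r1
           /\ r3 = - r1 /\ r4 = r2
  end.

Definition cont_on (a b : R) (f : R -> R) : Prop :=
  forall x, a <= x <= b -> forall eps, 0 < eps ->
    exists delta, 0 < delta /\
      forall y, a <= y <= b -> Rabs (y - x) < delta -> Rabs (f y - f x) < eps.

Definition is_fold_angle (x : R) : Prop := - PI <= x <= PI.

(* A rigid folding motion of the unit over rho in [a,b]: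
   T has sector angles a1, a2 adjacent to the shared crease c (folding angle
   rho), side creases with folding angles r2 (c2) and r4 (c4), opposite crease r3;
   B has sector angles a3, a4 adjacent to c, side creases r5 (its c2, same side
   of c as r2) and r7 (its c4, same side as r4), opposite crease r6. *)
Definition unit_motion (a1 a2 a3 a4 a b : R) (bT bB : branch)
  (r2 r3 r4 r5 r6 r7 : R -> R) : Prop :=
  (forall f : R -> R,
     (f = r2 \/ f = r3 \/ f = r4 \/ f = r5 \/ f = r6 \/ f = r7) ->
     cont_on a b f /\ forall x, a <= x <= b -> is_fold_angle (f x)) /\
  (forall x, a <= x <= b ->
     on_branch bT a1 a2 x (r2 x) (r3 x) (r4 x) /\
     on_branch bB a3 a4 x (r5 x) (r6 x) (r7 x)).

Definition eq_up_to_sign (a b : R) (f g : R -> R) : Prop :=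
  (forall x, a <= x <= b -> f x = g x) \/ (forall x, a <= x <= b -> f x = - g x).

From Stdlib Require Import Reals Lra.
Open Scope R_scope.

(* Writing t_i = tan (a_i / 2), each vertex ties its side angle r to rho by
   tan (r/2) = (N/D) tan (rho/2), with (N, D) = (t2 - t1, t2 + t1) on branch 1
   and (-(1 + t1 t2), 1 - t1 t2) on branch 2.  If r2 = +-r5 at a single generic
   rho, the pairs (N_T, D_T) and (N_B, D_B) are parallel, N_T D_B = +-N_B D_T.
   Conversely such a relation forces r2 = +-r5 at every rho in (-PI, PI), and
   continuity carries it to the flat-folded states rho = +-PI; when D = 0 both
   side creases are stuck at +-PI away from rho = 0, and continuity rules out a
   jump through rho = 0.  Cross-multiplied, the parallelism conditions are the
   ones of the theorem, and mixed branches never satisfy them because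
   |t2 - t1| < t2 + t1 and |1 - t3 t4| < 1 + t3 t4. *)

Section ClosedIntervalContinuity.

Variables a b : R.

(* Composing with [clamp] turns continuity relative to [a, b] into continuity
   on R, so that Stdlib's intermediate value theorem applies. *)
Definition clamp (x : R) : R := Rmax a (Rmin b x).

Lemma clamp_in x : a <= b -> a <= clamp x <= b.
Proof. intros; unfold clamp, Rmax, Rmin; repeat destruct Rle_dec; lra. Qed.

Lemma clamp_id x : a <= x <= b -> clamp x = x.
Proof. intros; unfold clamp, Rmax, Rmin; repeat destruct Rle_dec; lra. Qed.

Lemma clamp_lipschitz x y : a <= b -> Rabs (clamp y - clamp x) <= Rabs (y - x).
Proof. intros; unfold clamp, Rmax, Rmin; repeat destruct Rle_dec; split_Rabs; lra. Qed.

Lemma cont_on_continuity_clamp f : a <= b -> cont_on a b f -> continuity (fun x => f (clamp x)).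
Proof.
  intros Hab Hf x eps Heps.
  destruct (Hf (clamp x) (clamp_in x Hab) eps Heps) as [d [Hd Hclose]].
  exists d; split; [exact Hd|]; intros y [_ Hy]; simpl in *; unfold R_dist in *.
  apply Hclose; [apply clamp_in; exact Hab|].
  pose proof (clamp_lipschitz x y Hab); lra.
Qed.

Lemma cont_on_IVT f x y : cont_on a b f -> a <= x -> x <= y -> y <= b ->
  f x * f y <= 0 -> exists z, x <= z <= y /\ f z = 0.
Proof.
  intros Hf Hx Hxy Hy Hsign.
  destruct (IVT_cor _ x y (cont_on_continuity_clamp f ltac:(lra) Hf) Hxy) as [z [Hz Hfz]].
  - rewrite !clamp_id by lra; exact Hsign.
  - exists z; split; [exact Hz|]; rewrite clamp_id in Hfz by lra; exact Hfz.
Qed.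

Lemma cont_on_const c : cont_on a b (fun _ => c).
Proof.
  intros x _ eps Heps; exists 1; split; [lra|].
  intros; rewrite Rminus_diag, Rabs_R0; exact Heps.
Qed.

Lemma cont_on_opp f : cont_on a b f -> cont_on a b (fun x => - f x).
Proof.
  intros Hf x Hx eps Heps; destruct (Hf x Hx eps Heps) as [d [Hd Hclose]].
  exists d; split; [exact Hd|]; intros y Hy Hyx.
  replace (- f y - - f x) with (- (f y - f x)) by ring; rewrite Rabs_Ropp; auto.
Qed.

Lemma cont_on_Rabs f : cont_on a b f -> cont_on a b (fun x => Rabs (f x)).
Proof.
  intros Hf x Hx eps Heps; destruct (Hf x Hx eps Heps) as [d [Hd Hclose]].
  exists d; split; [exact Hd|]; intros y Hy Hyx.
  eapply Rle_lt_trans; [apply Rabs_triang_inv2|auto].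
Qed.

Hypothesis Hab : a < b.

Lemma exists_punctured_near x0 d : a <= x0 <= b -> 0 < d ->
  exists y, a <= y <= b /\ y <> x0 /\ Rabs (y - x0) < d.
Proof.
  intros Hx0 Hd; destruct (Rlt_le_dec x0 b) as [Hlt|Hge].
  - pose proof (Rmin_l d (b - x0)); pose proof (Rmin_r d (b - x0)).
    pose proof (Rmin_pos d (b - x0) Hd ltac:(lra)).
    exists (x0 + Rmin d (b - x0) / 2); split; [lra|split; [lra|split_Rabs; lra]].
  - pose proof (Rmin_l d (x0 - a)); pose proof (Rmin_r d (x0 - a)).
    pose proof (Rmin_pos d (x0 - a) Hd ltac:(lra)).
    exists (x0 - Rmin d (x0 - a) / 2); split; [lra|split; [lra|split_Rabs; lra]].
Qed.

Lemma cont_on_punctured_eq f g x0 d0 :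
  cont_on a b f -> cont_on a b g -> a <= x0 <= b -> 0 < d0 ->
  (forall y, a <= y <= b -> y <> x0 -> Rabs (y - x0) < d0 -> f y = g y) ->
  f x0 = g x0.
Proof.
  intros Hf Hg Hx0 Hd0 Hnear.
  destruct (Req_dec (f x0) (g x0)) as [Heq|Hne]; [exact Heq|exfalso].
  set (e := Rabs (f x0 - g x0) / 2).
  assert (He : 0 < e) by (apply Rdiv_lt_0_compat; [apply Rabs_pos_lt|]; lra).
  destruct (Hf x0 Hx0 e He) as [df [Hdf Hcf]].
  destruct (Hg x0 Hx0 e He) as [dg [Hdg Hcg]].
  pose proof (Rmin_l d0 (Rmin df dg)); pose proof (Rmin_r d0 (Rmin df dg)).
  pose proof (Rmin_l df dg); pose proof (Rmin_r df dg).
  destruct (exists_punctured_near x0 (Rmin d0 (Rmin df dg)) Hx0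
              (Rmin_pos _ _ Hd0 (Rmin_pos _ _ Hdf Hdg))) as [y [Hy [Hyx Hyd]]].
  pose proof (Hcf y Hy ltac:(lra)); pose proof (Hcg y Hy ltac:(lra)).
  rewrite (Hnear y Hy Hyx ltac:(lra)) in *.
  unfold e in *; split_Rabs; lra.
Qed.

Lemma cont_on_abs_const f c : cont_on a b f -> 0 < c ->
  (forall x, a <= x <= b -> Rabs (f x) = c) ->
  (forall x, a <= x <= b -> f x = c) \/ (forall x, a <= x <= b -> f x = - c).
Proof.
  intros Hf Hc Habs.
  assert (Hval : forall x, a <= x <= b -> f x = c \/ f x = - c).
  { intros x Hx; pose proof (Habs x Hx); split_Rabs; lra. }
  assert (Hconst : forall x, a <= x <= b -> f x = f a).
  { intros x Hx; destruct (Req_dec (f x) (f a)) as [Heq|Hne]; [exact Heq|exfalso].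
    assert (Hopp : f x = - f a) by (destruct (Hval a ltac:(lra)), (Hval x Hx); lra).
    destruct (cont_on_IVT f a x Hf ltac:(lra) ltac:(lra) ltac:(lra)) as [z [Hz Hfz]].
    - rewrite Hopp; nra.
    - pose proof (Habs z ltac:(lra)) as Hz0; rewrite Hfz, Rabs_R0 in Hz0; lra. }
  destruct (Hval a ltac:(lra)) as [Ha|Ha]; [left|right];
    intros x Hx; rewrite (Hconst x Hx); exact Ha.
Qed.

End ClosedIntervalContinuity.

Lemma cos_half_pos x : -PI < x < PI -> 0 < cos (x / 2).
Proof. intros; apply cos_gt_0; lra. Qed.

Lemma sin_half_neq0 x : -PI <= x <= PI -> x <> 0 -> sin (x / 2) <> 0.
Proof.
  intros Hx Hx0; destruct (Rlt_le_dec 0 x).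
  - pose proof (sin_gt_0 (x / 2) ltac:(lra) ltac:(lra)); lra.
  - pose proof (sin_gt_0 (- (x / 2)) ltac:(lra) ltac:(lra)); rewrite sin_neg in *; lra.
Qed.

Lemma sin_cos_half_not_both0 y : ~ (sin (y / 2) = 0 /\ cos (y / 2) = 0).
Proof.
  intros [Hs Hc]; pose proof (sin2_cos2 (y / 2)) as Hpyth; rewrite Hs, Hc in Hpyth.
  unfold Rsqr in Hpyth; lra.
Qed.

Lemma fold_angle_cos_half_eq0 y : is_fold_angle y -> (cos (y / 2) = 0 <-> Rabs y = PI).
Proof.
  unfold is_fold_angle; intros Hy; split; intros H.
  - destruct (Req_dec (Rabs y) PI) as [Habs|Habs]; [exact Habs|exfalso].
    pose proof (cos_half_pos y ltac:(split_Rabs; lra)); lra.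
  - destruct (Rle_lt_dec 0 y).
    + replace (y / 2) with (PI / 2) by (split_Rabs; lra); apply cos_PI2.
    + replace (y / 2) with (- (PI / 2)) by (split_Rabs; lra); rewrite cos_neg; apply cos_PI2.
Qed.

Lemma half_tan_rel_scale l N D y x : l <> 0 ->
  half_tan_rel (l * N) (l * D) y x <-> half_tan_rel N D y x.
Proof.
  unfold half_tan_rel; intros Hl; split; intros H.
  - apply (Rmult_eq_reg_l l); [lra|exact Hl].
  - transitivity (l * (D * sin (y / 2) * cos (x / 2))); [ring|rewrite H; ring].
Qed.

Lemma half_tan_rel_opp N D y x :
  half_tan_rel N D (- y) x <-> half_tan_rel (- N) D y x.
Proof.
  unfold half_tan_rel; replace (- y / 2) with (- (y / 2)) by field.
  rewrite sin_neg, cos_neg; split; intros; lra.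
Qed.

Lemma half_tan_rel_common N D N' D' y x :
  sin (x / 2) <> 0 -> cos (x / 2) <> 0 ->
  half_tan_rel N D y x -> half_tan_rel N' D' y x -> N * D' = N' * D.
Proof.
  unfold half_tan_rel; intros Hs Hc H H'.
  assert (Hsv : (N * D' - N' * D) * (sin (x / 2) * cos (y / 2)) = 0).
  { transitivity (D' * (N * sin (x / 2) * cos (y / 2)) - D * (N' * sin (x / 2) * cos (y / 2)));
      [ring|rewrite <- H, <- H'; ring]. }
  assert (Hcu : (N * D' - N' * D) * (cos (x / 2) * sin (y / 2)) = 0).
  { transitivity (N * (N' * sin (x / 2) * cos (y / 2)) - N' * (N * sin (x / 2) * cos (y / 2)));
      [rewrite <- H, <- H'; ring|ring]. }
  destruct (Req_dec (N * D' - N' * D) 0) as [Hz|Hnz]; [lra|exfalso].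
  apply (sin_cos_half_not_both0 y); split.
  - apply Rmult_integral in Hcu as [|Hcu]; [contradiction|].
    apply Rmult_integral in Hcu as [|]; [contradiction|assumption].
  - apply Rmult_integral in Hsv as [|Hsv]; [contradiction|].
    apply Rmult_integral in Hsv as [|]; [contradiction|assumption].
Qed.

Lemma half_tan_rel_degenerate N y x : N <> 0 -> -PI <= x <= PI -> x <> 0 ->
  is_fold_angle y -> half_tan_rel N 0 y x -> Rabs y = PI.
Proof.
  unfold half_tan_rel; intros HN Hx Hx0 Hy H.
  apply (fold_angle_cos_half_eq0 y Hy).
  assert (Hprod : N * sin (x / 2) * cos (y / 2) = 0) by lra.
  apply Rmult_integral in Hprod as [Hprod|]; [|assumption].
  apply Rmult_integral in Hprod as [|]; [contradiction|].
  exfalso; apply (sin_half_neq0 x); assumption.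
Qed.

Lemma half_tan_rel_tan N D y x : D <> 0 -> -PI < x < PI -> is_fold_angle y ->
  half_tan_rel N D y x -> -PI < y < PI /\ tan (y / 2) = N / D * tan (x / 2).
Proof.
  unfold half_tan_rel; intros HD Hx Hy H.
  pose proof (cos_half_pos x Hx) as Hcx.
  assert (Hcy : cos (y / 2) <> 0).
  { intros Hcy; apply (sin_cos_half_not_both0 y); split; [|exact Hcy].
    rewrite Hcy, Rmult_0_r in H.
    apply Rmult_integral in H as [H|]; [|lra].
    apply Rmult_integral in H as [|]; [contradiction|assumption]. }
  split.
  - assert (Habs : Rabs y <> PI) by (rewrite <- (fold_angle_cos_half_eq0 y Hy); exact Hcy).
    unfold is_fold_angle in Hy; split_Rabs; lra.
  - unfold tan; field_simplify_eq; [lra|repeat split; lra].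
Qed.

Definition parallel_up_to_sign (N D N' D' : R) : Prop :=
  N * D' = N' * D \/ N * D' = - (N' * D).

Section Solutions.

Variables a b : R.

Hypotheses (Ha : -PI <= a) (Hab : a < b) (Hb : b <= PI).

Lemma degenerate_solution_const h N : N <> 0 -> cont_on a b h ->
  (forall x, a <= x <= b -> is_fold_angle (h x)) ->
  (forall x, a <= x <= b -> half_tan_rel N 0 (h x) x) ->
  (forall x, a <= x <= b -> h x = PI) \/ (forall x, a <= x <= b -> h x = - PI).
Proof.
  intros HN Hh Hfold Hrel.
  assert (Hoff0 : forall x, a <= x <= b -> x <> 0 -> Rabs (h x) = PI).
  { intros x Hx Hx0; apply (half_tan_rel_degenerate N _ x); auto; lra. }
  apply (cont_on_abs_const a b); [exact Hab|exact Hh|exact PI_RGT_0|].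
  intros x Hx; destruct (Req_dec x 0) as [->|Hx0]; [|exact (Hoff0 x Hx Hx0)].
  apply (cont_on_punctured_eq a b Hab (fun x => Rabs (h x)) (fun _ => PI) 0 1);
    [apply cont_on_Rabs, Hh|apply cont_on_const|exact Hx|lra|].
  intros y Hy Hy0 _; exact (Hoff0 y Hy Hy0).
Qed.

Variables f g : R -> R.

Hypotheses (Hf : cont_on a b f) (Hg : cont_on a b g).
Hypothesis Hfold : forall x, a <= x <= b -> is_fold_angle (f x) /\ is_fold_angle (g x).

Lemma nondegenerate_solutions_eq N D N' D' : D <> 0 -> D' <> 0 -> N * D' = N' * D ->
  (forall x, a <= x <= b -> half_tan_rel N D (f x) x /\ half_tan_rel N' D' (g x) x) ->
  forall x, a <= x <= b -> f x = g x.
Proof.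
  intros HD HD' Hpar Hrel.
  assert (Hopen : forall x, a <= x <= b -> -PI < x < PI -> f x = g x).
  { intros x Hx Hxo; destruct (Hrel x Hx) as [Hrf Hrg]; destruct (Hfold x Hx) as [Hff Hgf].
    destruct (half_tan_rel_tan N D (f x) x HD Hxo Hff Hrf) as [Hfo Htf].
    destruct (half_tan_rel_tan N' D' (g x) x HD' Hxo Hgf Hrg) as [Hgo Htg].
    assert (Hslope : N / D = N' / D') by (field_simplify_eq; [lra|split; assumption]).
    enough (f x / 2 = g x / 2) by lra.
    apply tan_inj; [lra|lra|rewrite Htf, Htg, Hslope; reflexivity]. }
  intros x Hx; destruct (Rle_lt_dec PI (Rabs x)) as [Hedge|Hint].
  - apply (cont_on_punctured_eq a b Hab f g x PI Hf Hg Hx PI_RGT_0).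
    intros y Hy Hyx Hyd; apply Hopen; [exact Hy|split_Rabs; lra].
  - apply Hopen; [exact Hx|split_Rabs; lra].
Qed.

Lemma parallel_solutions_eq_up_to_sign N D N' D' :
  ~ (N = 0 /\ D = 0) -> ~ (N' = 0 /\ D' = 0) -> N * D' = N' * D ->
  (forall x, a <= x <= b -> half_tan_rel N D (f x) x /\ half_tan_rel N' D' (g x) x) ->
  eq_up_to_sign a b f g.
Proof.
  intros Hnz Hnz' Hpar Hrel; destruct (Req_dec D 0) as [HD|HD].
  - subst D; assert (HN : N <> 0) by tauto.
    assert (HD' : D' = 0).
    { rewrite Rmult_0_r in Hpar; apply Rmult_integral in Hpar as [|]; tauto. }
    subst D'; assert (HN' : N' <> 0) by tauto.
    destruct (degenerate_solution_const f N HN Hf (fun x Hx => proj1 (Hfold x Hx))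
                (fun x Hx => proj1 (Hrel x Hx))) as [Hfc|Hfc];
    destruct (degenerate_solution_const g N' HN' Hg (fun x Hx => proj2 (Hfold x Hx))
                (fun x Hx => proj2 (Hrel x Hx))) as [Hgc|Hgc];
    [left|right|right|left]; intros x Hx; rewrite Hfc, Hgc by exact Hx; ring.
  - assert (HD' : D' <> 0).
    { intros HD'; subst D'; apply Hnz'; split; [|reflexivity].
      rewrite Rmult_0_r in Hpar; symmetry in Hpar.
      apply Rmult_integral in Hpar as [|]; [lra|contradiction]. }
    left; exact (nondegenerate_solutions_eq N D N' D' HD HD' Hpar Hrel).
Qed.

End Solutions.

Lemma solutions_eq_up_to_sign a b f g N D N' D' :
  -PI <= a -> a < b -> b <= PI -> cont_on a b f -> cont_on a b g ->
  (forall x, a <= x <= b -> is_fold_angle (f x) /\ is_fold_angle (g x)) ->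
  (forall x, a <= x <= b -> half_tan_rel N D (f x) x /\ half_tan_rel N' D' (g x) x) ->
  ~ (N = 0 /\ D = 0) -> ~ (N' = 0 /\ D' = 0) -> parallel_up_to_sign N D N' D' ->
  eq_up_to_sign a b f g.
Proof.
  intros Ha Hab Hb Hf Hg Hfold Hrel Hnz Hnz' [Hpar|Hanti].
  - exact (parallel_solutions_eq_up_to_sign a b Ha Hab Hb f g Hf Hg Hfold N D N' D'
             Hnz Hnz' Hpar Hrel).
  - assert (Hfold' : forall x, a <= x <= b -> is_fold_angle (f x) /\ is_fold_angle (- g x)).
    { intros x Hx; destruct (Hfold x Hx) as [Hff Hgf]; split; [exact Hff|].
      unfold is_fold_angle in *; lra. }
    assert (Hopp : eq_up_to_sign a b f (fun x => - g x)).
    { apply (parallel_solutions_eq_up_to_sign a b Ha Hab Hb f (fun x => - g x) Hf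
               (cont_on_opp a b g Hg) Hfold' N D (- N') D'); [exact Hnz| |lra|].
      - intros [HN' HD']; apply Hnz'; split; lra.
      - intros x Hx; destruct (Hrel x Hx) as [Hrf Hrg]; split; [exact Hrf|].
        apply half_tan_rel_opp; rewrite Ropp_involutive; exact Hrg. }
    destruct Hopp as [Hopp|Hopp]; [right|left]; intros x Hx; rewrite (Hopp x Hx); ring.
Qed.

Lemma eq_up_to_sign_parallel a b f g N D N' D' : -PI <= a -> a < b -> b <= PI ->
  (forall x, a <= x <= b -> half_tan_rel N D (f x) x /\ half_tan_rel N' D' (g x) x) ->
  eq_up_to_sign a b f g -> parallel_up_to_sign N D N' D'.
Proof.
  intros Ha Hab Hb Hrel Hsign.
  assert (Hx0 : exists x0, a < x0 < b /\ x0 <> 0).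
  { destruct (Req_dec ((a + b) / 2) 0).
    - exists ((a + 3 * b) / 4); split; lra.
    - exists ((a + b) / 2); split; lra. }
  destruct Hx0 as [x0 [Hx0 Hx00]].
  assert (Hs : sin (x0 / 2) <> 0) by (apply sin_half_neq0; lra).
  assert (Hc : cos (x0 / 2) <> 0) by (pose proof (cos_half_pos x0 ltac:(lra)); lra).
  destruct (Hrel x0 ltac:(lra)) as [Hrf Hrg].
  destruct Hsign as [Heq|Hopp]; [left|right].
  - rewrite <- Heq in Hrg by lra; exact (half_tan_rel_common _ _ _ _ _ _ Hs Hc Hrf Hrg).
  - replace (g x0) with (- f x0) in Hrg by (rewrite Hopp by lra; ring).
    apply half_tan_rel_opp in Hrg.
    rewrite (half_tan_rel_common _ _ _ _ _ _ Hs Hc Hrf Hrg); ring.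
Qed.

(* The coefficient pairs of [on_branch], divided by cos (b1/2) cos (b2/2) and
   written in t_i = tan (b_i / 2). *)
Definition branch_num (br : branch) (t1 t2 : R) : R :=
  match br with Br1 => t2 - t1 | Br2 => - (1 + t1 * t2) end.

Definition branch_den (br : branch) (t1 t2 : R) : R :=
  match br with Br1 => t2 + t1 | Br2 => 1 - t1 * t2 end.

Definition branch_sign (br : branch) : R :=
  match br with Br1 => -1 | Br2 => 1 end.

Lemma tan_half_pos t : 0 < t < PI -> 0 < tan (t / 2).
Proof. intros; apply tan_gt_0; lra. Qed.

Lemma on_branch_half_tan_rel br b1 b2 r1 r2 r3 r4 : 0 < b1 < PI -> 0 < b2 < PI ->
  on_branch br b1 b2 r1 r2 r3 r4 ->
  half_tan_rel (branch_num br (tan (b1 / 2)) (tan (b2 / 2)))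
               (branch_den br (tan (b1 / 2)) (tan (b2 / 2))) r2 r1.
Proof.
  intros Hb1 Hb2 Hbr.
  pose proof (cos_half_pos b1 ltac:(lra)); pose proof (cos_half_pos b2 ltac:(lra)).
  apply (half_tan_rel_scale (cos (b1 / 2) * cos (b2 / 2))); [nra|].
  destruct br; destruct Hbr as [Hrel _]; simpl; unfold tan;
    replace ((b2 - b1) / 2) with (b2 / 2 - b1 / 2) in Hrel by field;
    replace ((b2 + b1) / 2) with (b2 / 2 + b1 / 2) in Hrel by field.
  - rewrite sin_minus, sin_plus in Hrel.
    replace (cos (b1 / 2) * cos (b2 / 2) * (sin (b2 / 2) / cos (b2 / 2) - sin (b1 / 2) / cos (b1 / 2)))
      with (sin (b2 / 2) * cos (b1 / 2) - cos (b2 / 2) * sin (b1 / 2)) by (field; lra).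
    replace (cos (b1 / 2) * cos (b2 / 2) * (sin (b2 / 2) / cos (b2 / 2) + sin (b1 / 2) / cos (b1 / 2)))
      with (sin (b2 / 2) * cos (b1 / 2) + cos (b2 / 2) * sin (b1 / 2)) by (field; lra).
    exact Hrel.
  - rewrite cos_minus, cos_plus in Hrel.
    replace (cos (b1 / 2) * cos (b2 / 2) * - (1 + sin (b1 / 2) / cos (b1 / 2) * (sin (b2 / 2) / cos (b2 / 2))))
      with (- (cos (b2 / 2) * cos (b1 / 2) + sin (b2 / 2) * sin (b1 / 2))) by (field; lra).
    replace (cos (b1 / 2) * cos (b2 / 2) * (1 - sin (b1 / 2) / cos (b1 / 2) * (sin (b2 / 2) / cos (b2 / 2))))
      with (cos (b2 / 2) * cos (b1 / 2) - sin (b2 / 2) * sin (b1 / 2)) by (field; lra).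
    exact Hrel.
Qed.

Lemma on_branch_side br b1 b2 r1 r2 r3 r4 :
  on_branch br b1 b2 r1 r2 r3 r4 -> r4 = branch_sign br * r2.
Proof. destruct br; intros [_ [_ ->]]; simpl; ring. Qed.

Lemma branch_coeffs_neq0 br t1 t2 : 0 < t1 -> 0 < t2 ->
  ~ (branch_num br t1 t2 = 0 /\ branch_den br t1 t2 = 0).
Proof. destruct br; simpl; intros; nra. Qed.

Lemma mul_lt_of_abs_lt A B C E : Rabs A < B -> Rabs C < E -> Rabs (A * C) < B * E.
Proof.
  intros HA HC; rewrite Rabs_mult.
  apply Rmult_le_0_lt_compat; auto using Rabs_pos.
Qed.

Lemma branch_parallel_iff bT bB t1 t2 t3 t4 : 0 < t1 -> 0 < t2 -> 0 < t3 -> 0 < t4 ->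
  parallel_up_to_sign (branch_num bT t1 t2) (branch_den bT t1 t2)
                      (branch_num bB t3 t4) (branch_den bB t3 t4) <->
  ((bT = Br1 /\ bB = Br1 /\ (t1 / t2 = t3 / t4 \/ t1 / t2 = t4 / t3)) \/
   (bT = Br2 /\ bB = Br2 /\ (t1 * t2 = t3 * t4 \/ t1 * t2 * t3 * t4 = 1))).
Proof.
  intros H1 H2 H3 H4; unfold parallel_up_to_sign.
  assert (Hmixed : forall u1 u2 u3 u4, 0 < u1 -> 0 < u2 -> 0 < u3 -> 0 < u4 ->
            Rabs ((u2 - u1) * (1 - u3 * u4)) < (u2 + u1) * (1 + u3 * u4)).
  { intros; apply mul_lt_of_abs_lt; pose proof (Rmult_lt_0_compat u3 u4); split_Rabs; lra. }
  destruct bT, bB; simpl; split.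
  - intros [H|H]; left; (split; [reflexivity|split; [reflexivity|]]);
      [left|right]; field_simplify_eq; lra.
  - intros [[_ [_ [H|H]]]|[? _]]; [left|right|discriminate];
      field_simplify_eq in H; lra.
  - pose proof (Hmixed t1 t2 t3 t4 H1 H2 H3 H4) as Hlt.
    intros [H|H]; exfalso; split_Rabs; lra.
  - intros [[_ [? _]]|[? _]]; discriminate.
  - pose proof (Hmixed t3 t4 t1 t2 H3 H4 H1 H2) as Hlt.
    intros [H|H]; exfalso; split_Rabs; lra.
  - intros [[? _]|[_ [? _]]]; discriminate.
  - intros [H|H]; right; (split; [reflexivity|split; [reflexivity|]]);
      [left|right]; nra.
  - intros [[? _]|[_ [_ [H|H]]]]; [discriminate|left|right]; nra.
Qed.

Lemma eq_up_to_sign_mul a b k f g f' g' :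
  (forall x, a <= x <= b -> f' x = k * f x) ->
  (forall x, a <= x <= b -> g' x = k * g x) ->
  eq_up_to_sign a b f g -> eq_up_to_sign a b f' g'.
Proof.
  intros Hf Hg [Heq|Hopp]; [left|right]; intros x Hx;
    rewrite Hf, Hg by exact Hx; [rewrite Heq|rewrite Hopp]; auto; ring.
Qed.

Theorem mainTheorem2 (a1 a2 a3 a4 a b : R) (bT bB : branch)
  (r2 r3 r4 r5 r6 r7 : R -> R) :
  0 < a1 < PI -> 0 < a2 < PI -> 0 < a3 < PI -> 0 < a4 < PI ->
  ~ (a1 = PI / 2 /\ a2 = PI / 2) -> ~ (a3 = PI / 2 /\ a4 = PI / 2) ->
  - PI <= a -> a < b -> b <= PI ->
  unit_motion a1 a2 a3 a4 a b bT bB r2 r3 r4 r5 r6 r7 ->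
  ((eq_up_to_sign a b r2 r5 /\ eq_up_to_sign a b r4 r7) <->
   ((bT = Br1 /\ bB = Br1 /\
     (tan (a1 / 2) / tan (a2 / 2) = tan (a3 / 2) / tan (a4 / 2) \/
      tan (a1 / 2) / tan (a2 / 2) = tan (a4 / 2) / tan (a3 / 2)))
    \/
    (bT = Br2 /\ bB = Br2 /\
     (tan (a1 / 2) * tan (a2 / 2) = tan (a3 / 2) * tan (a4 / 2) \/
      tan (a1 / 2) * tan (a2 / 2) * tan (a3 / 2) * tan (a4 / 2) = 1)))).
Proof.
  intros Ha1 Ha2 Ha3 Ha4 _ _ Ha Hab Hb [Hcont Hbr].
  destruct (Hcont r2 ltac:(tauto)) as [C2 F2]; destruct (Hcont r5 ltac:(tauto)) as [C5 F5].
  pose proof (tan_half_pos a1 Ha1) as Ht1; pose proof (tan_half_pos a2 Ha2) as Ht2.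
  pose proof (tan_half_pos a3 Ha3) as Ht3; pose proof (tan_half_pos a4 Ha4) as Ht4.
  rewrite <- (branch_parallel_iff bT bB _ _ _ _ Ht1 Ht2 Ht3 Ht4).
  assert (Hrel : forall x, a <= x <= b ->
    half_tan_rel (branch_num bT (tan (a1 / 2)) (tan (a2 / 2)))
                 (branch_den bT (tan (a1 / 2)) (tan (a2 / 2))) (r2 x) x /\
    half_tan_rel (branch_num bB (tan (a3 / 2)) (tan (a4 / 2)))
                 (branch_den bB (tan (a3 / 2)) (tan (a4 / 2))) (r5 x) x).
  { intros x Hx; destruct (Hbr x Hx) as [HT HB].
    split; eapply on_branch_half_tan_rel; eassumption. }
  split.
  - intros [E25 _]; exact (eq_up_to_sign_parallel a b r2 r5 _ _ _ _ Ha Hab Hb Hrel E25).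
  - intros Hpar.
    assert (E25 : eq_up_to_sign a b r2 r5).
    { eapply (solutions_eq_up_to_sign a b r2 r5 _ _ _ _ Ha Hab Hb C2 C5);
        [intros x Hx; split; [apply F2|apply F5]; exact Hx|exact Hrel
        |apply branch_coeffs_neq0; assumption|apply branch_coeffs_neq0; assumption|exact Hpar]. }
    split; [exact E25|].
    assert (Hsame : bT = bB).
    { apply (branch_parallel_iff bT bB _ _ _ _ Ht1 Ht2 Ht3 Ht4) in Hpar.
      destruct Hpar as [[-> [-> _]]|[-> [-> _]]]; reflexivity. }
    apply (eq_up_to_sign_mul a b (branch_sign bT) r2 r5); [| |exact E25];
      intros x Hx; destruct (Hbr x Hx) as [HT HB]; [|rewrite Hsame];
      eapply on_branch_side; eassumption.
Qed.
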